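(* Let $\Lambda\subseteq[0,\infty]$ with $0\in\Lambda$. Suppose $\pi$ is convex and there are constants $c_m>0$, $C_{\ell,3}<\infty$ such that: for all $i\in[n]$ and $\lambda\in\Lambda$, $m(P_{-i},\cdot,\lambda)$ has $\nu(r)=c_mr^2$ gradient growth; $\mathrm{Lip}(\nabla^2_\beta\ell(P_{-i},\cdot))\le C_{\ell,3}$ for all $i\in[n]$; and $B_{s,r}<\infty$ for each $(s,r)\in\{(0,3),(1,3),(1,4)\}$. Then for all $\lambda\in\Lambda$, $$|\mathrm{ProxACV}(\lambda)-\mathrm{CV}(\lambda)|\le\frac{C_{\ell,3}}{n^2}\Big(\frac{B_{0,3}}{2c_m^3}+\frac{B_{1,3}}{2nc_m^4}+\frac{C_{\ell,3}B_{1,4}}{8n^2c_m^6}\Big).$$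
   Context: Data $z_1,\dots,z_n\in\mathcal Z$; loss $\ell:\mathcal Z\times\mathbb{R}^d\to\mathbb{R}$ (sufficiently differentiable in $\beta$), regularizer $\pi:\mathbb{R}^d\to\mathbb{R}$ (possibly non-smooth). $\ell(\mu,\beta):=\int\ell(z,\beta)d\mu(z)$, $m(\mu,\beta,\lambda):=\ell(\mu,\beta)+\lambda\pi(\beta)$; $P_n:=\frac1n\sum_i\delta_{z_i}$, $P_{-i}:=\frac1n\sum_{j\ne i}\delta_{z_j}$. $\hat\beta(\lambda):=\arg\min_\beta m(P_n,\beta,\lambda)$ ($\lambda<\infty$), $\hat\beta(\infty):=\arg\min\pi$; $\hat\beta_{-i}(\lambda):=\arg\min_\beta m(P_{-i},\beta,\lambda)$; $\mathrm{CV}(\lambda):=\frac1n\sum_i\ell(z_i,\hat\beta_{-i}(\lambda))$. With $H_{\ell,i}:=\nabla^2_\beta\ell(P_{-i},\hat\beta(\lambda))$ and $g_{\ell,i}:=\nabla_\beta\ell(P_{-i},\hat\beta(\lambda))$, define $\hat\beta^{\mathrm{prox}}_{-i}(\lambda):=\arg\min_{\beta}\frac12\|\hat\beta(\lambda)-\beta\|_{H_{\ell,i}}^2+\beta^\top g_{\ell,i}+\lambda\pi(\beta)$ (with $\|v\|_H^2:=v^\top Hv$), and $\mathrm{ProxACV}(\lambda):=\frac1n\sum_i\ell(z_i,\hat\beta^{\mathrm{prox}}_{-i}(\lambda))$. $\|H\|_{op}:=\sup_{v\ne0}\|H[v]\|_{op}/\|v\|_2$; $\mathrm{Lip}(f):=\sup_{x\ne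 y}\|f(x)-f(y)\|_{op}/\|x-y\|_2$. $B_{s,r}:=\sup_{\lambda\in\Lambda}\frac1n\sum_i\mathrm{Lip}(\nabla_\beta\ell(z_i,\cdot))^s\|\nabla_\beta\ell(z_i,\hat\beta(\lambda))\|_2^r$. $\varphi$ has $\nu$ gradient growth if subdifferentiable and $\nu(\|x-y\|_2)\le\langle y-x,u-v\rangle$ for all $x,y$, $u\in\partial\varphi(y)$, $v\in\partial\varphi(x)$. *)

From HB Require Import structures.
From mathcomp Require Import all_boot all_order all_algebra.
From mathcomp Require Import all_classical all_reals all_analysis.
Set Implicit Arguments. Unset Strict Implicit. Unset Printing Implicit Defensive.
Import Order.TTheory GRing.Theory Num.Theory.
Import numFieldNormedType.Exports.
Local Open Scope classical_set_scope.
Local Open Scope ring_scope.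

Section Geometry.
Context {R : realType} {d : nat}.
Local Notation vec := 'cV[R]_d.

Definition ev (j : 'I_d) : vec := delta_mx j 0.
Definition dot (u v : vec) : R := \sum_j u j 0 * v j 0.
Definition l2 (v : vec) : R := Num.sqrt (dot v v).

Definition grad (f : vec -> R) (x : vec) : vec := \col_j ('D_(ev j) f x).
Definition jac (G : vec -> vec) (x : vec) : 'M[R]_d :=
  \matrix_(j, k) (('D_(ev k) G x) j 0).
Definition hess (f : vec -> R) (x : vec) : 'M[R]_d := jac (grad f) x.

Definition opnorm (A : 'M[R]_d) : R :=
  sup [set r | exists v : vec, v != 0 /\ r = l2 (A *m v) / l2 v].

Definition LipV (G : vec -> vec) : \bar R :=
  ereal_sup [set r | exists x y : vec, x != y /\
                       r = (l2 (G x - G y) / l2 (x - y))%:E].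
Definition LipM (H : vec -> 'M[R]_d) : \bar R :=
  ereal_sup [set r | exists x y : vec, x != y /\
                       r = (opnorm (H x - H y) / l2 (x - y))%:E].

Definition convex_fun (f : vec -> R) : Prop :=
  forall x y (t : R), 0 <= t -> t <= 1 ->
    f (t *: x + (1 - t) *: y) <= t * f x + (1 - t) * f y.

Definition subdiff (phi : vec -> R) (x : vec) : set vec :=
  [set u | forall y, phi x + dot u (y - x) <= phi y].

Definition grad_growth (nu : R -> R) (phi : vec -> R) : Prop :=
  (forall x, subdiff phi x !=set0) /\
  (forall x y u v, subdiff phi y u -> subdiff phi x v ->
     nu (l2 (x - y)) <= dot (y - x) (u - v)).

Definition is_argmin (f : vec -> R) (x : vec) : Prop := forall y, f x <= f y.

End Geometry.

Section Model.
Context {R : realType} {d n : nat} {Z : Type}.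
Local Notation vec := 'cV[R]_d.
Variables (z : 'I_n -> Z) (ell : Z -> vec -> R) (pi : vec -> R).

(* l(P_n, b) and l(P_{-i}, b) (both with weight 1/n) *)
Definition lossPn (b : vec) : R := n%:R^-1 * \sum_(j < n) ell (z j) b.
Definition lossPm (i : 'I_n) (b : vec) : R :=
  n%:R^-1 * \sum_(j < n | j != i) ell (z j) b.

Definition mPn (lam : R) (b : vec) : R := lossPn b + lam * pi b.
Definition mPm (i : 'I_n) (lam : R) (b : vec) : R := lossPm i b + lam * pi b.

Definition prox_obj (bh : vec) (i : 'I_n) (lam : R) (b : vec) : R :=
  2^-1 * dot (bh - b) (hess (lossPm i) bh *m (bh - b))
  + dot b (grad (lossPm i) bh) + lam * pi b.

Definition CV (bm : 'I_n -> R -> vec) (lam : R) : R :=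
  n%:R^-1 * \sum_(i < n) ell (z i) (bm i lam).
Definition ProxACV (bp : 'I_n -> R -> vec) (lam : R) : R :=
  n%:R^-1 * \sum_(i < n) ell (z i) (bp i lam).

(* B_{s,r} (in the extended reals; Lip^s computed in \bar R, 0 * +oo = 0) *)
Definition Bsr (Lam : set R) (bh : R -> vec) (s r : nat) : \bar R :=
  ereal_sup [set ((n%:R^-1)%:E *
      \sum_(i < n) (iter s (fun e => LipV (grad (ell (z i))) * e) 1
                     * ((l2 (grad (ell (z i)) (bh lam))) ^+ r)%:E))%E
    | lam in Lam].

End Model.

From HB Require Import structures.
From mathcomp Require Import all_boot all_order all_algebra.
From mathcomp Require Import all_classical all_reals all_analysis.
From mathcomp Require Import ring lra.
Set Implicit Arguments. Unset Strict Implicit. Unset Printing Implicit Defensive.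
Import Order.TTheory GRing.Theory Num.Theory.
Import numFieldNormedType.Exports.
Local Open Scope classical_set_scope.
Local Open Scope ring_scope.

(* Fix lam and i; write bh, bm, bp for betahat(lam), betahat_{-i}(lam) and
   betahat^prox_{-i}(lam), L for l(P_{-i}, .), l for l(z_i, .) and k = 1/n, so that
   m(P_n, ., lam) = m(P_{-i}, ., lam) + k l.  Quadratic gradient growth of
   m(P_{-i}, ., lam), applied to its subgradients -k grad l(bh) at bh and 0 at bm,
   gives c_m |bm - bh| <= k |grad l(bh)|.  The point bp is a proximal Newton step
   from bh: comparing its optimality condition with that of bm, through the
   second-order Taylor bound and the symmetry of the Lipschitz Hessian of L, gives
   2 c_m |bp - bm| <= C_{l,3} |bm - bh|^2.  A first-order Taylor bound for l then
   controls |l(bp) - l(bm)|, and averaging over i produces the constants B_{s,r}. *)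

Section Euclidean.
Context {R : realType} {d : nat}.
Local Notation vec := 'cV[R]_d.
Implicit Types u v w : vec.

Lemma dotC u v : dot u v = dot v u.
Proof. by apply: eq_bigr => j _; rewrite mulrC. Qed.

Lemma dotDl u v w : dot (u + v) w = dot u w + dot v w.
Proof. by rewrite /dot -big_split; apply: eq_bigr => j _; rewrite !mxE mulrDl. Qed.

Lemma dotDr u v w : dot w (u + v) = dot w u + dot w v.
Proof. by rewrite dotC dotDl !(dotC w). Qed.

Lemma dotZl (a : R) u v : dot (a *: u) v = a * dot u v.
Proof. by rewrite /dot mulr_sumr; apply: eq_bigr => j _; rewrite !mxE mulrA. Qed.

Lemma dotZr (a : R) u v : dot u (a *: v) = a * dot u v.
Proof. by rewrite dotC dotZl dotC. Qed.

Lemma dotNl u v : dot (- u) v = - dot u v.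
Proof. by rewrite -scaleN1r dotZl mulN1r. Qed.

Lemma dotNr u v : dot u (- v) = - dot u v.
Proof. by rewrite dotC dotNl dotC. Qed.

Lemma dotBl u v w : dot (u - v) w = dot u w - dot v w.
Proof. by rewrite dotDl dotNl. Qed.

Lemma dotBr u v w : dot w (u - v) = dot w u - dot w v.
Proof. by rewrite dotDr dotNr. Qed.

Lemma dot0l v : dot 0 v = 0.
Proof. by rewrite /dot big1 // => j _; rewrite mxE mul0r. Qed.

Lemma dot0r v : dot v 0 = 0.
Proof. by rewrite dotC dot0l. Qed.

Lemma dot_self_ge0 v : 0 <= dot v v.
Proof. by apply: sumr_ge0 => j _; rewrite -expr2 sqr_ge0. Qed.

Lemma dot_self_eq0 v : dot v v = 0 -> v = 0.
Proof.
move=> /eqP; rewrite psumr_eq0 => [/allP v0|j _]; last by rewrite -expr2 sqr_ge0.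
apply/matrixP => i j; rewrite (ord1 j) mxE.
by have := v0 i (mem_index_enum _); rewrite -expr2 sqrf_eq0 => /eqP.
Qed.

Lemma l2_ge0 v : 0 <= l2 v.
Proof. exact: sqrtr_ge0. Qed.

Lemma sqr_l2 v : l2 v ^+ 2 = dot v v.
Proof. by rewrite sqr_sqrtr // dot_self_ge0. Qed.

Lemma l2_0 : l2 (0 : vec) = 0.
Proof. by rewrite /l2 dot0l sqrtr0. Qed.

Lemma l2_eq0 v : l2 v = 0 -> v = 0.
Proof. by move=> v0; apply: dot_self_eq0; rewrite -sqr_l2 v0 expr0n. Qed.

Lemma l2_gt0 v : v != 0 -> 0 < l2 v.
Proof.
by move=> v0; rewrite lt_def l2_ge0 andbT; apply: contraNneq v0 => /l2_eq0 ->.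
Qed.

Lemma l2Z (a : R) v : l2 (a *: v) = `|a| * l2 v.
Proof. by rewrite /l2 dotZl dotZr mulrA -expr2 sqrtrM ?sqr_ge0 // sqrtr_sqr. Qed.

Lemma l2N v : l2 (- v) = l2 v.
Proof. by rewrite -scaleN1r l2Z normrN normr1 mul1r. Qed.

Lemma l2_distC u v : l2 (u - v) = l2 (v - u).
Proof. by rewrite -l2N opprB. Qed.

Lemma cauchy_schwarz_sqr u v : dot u v ^+ 2 <= dot u u * dot v v.
Proof.
have [v0|vn0] := eqVneq (dot v v) 0.
  by rewrite (dot_self_eq0 v0) dot0r expr0n /= dot0r mulr0.
have vp : 0 < dot v v by rewrite lt_def vn0 dot_self_ge0.
have := dot_self_ge0 (u - (dot u v / dot v v) *: v).
rewrite !dotBl !dotBr !dotZl !dotZr (dotC v u) => h.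
rewrite -subr_ge0.
have -> : dot u u * dot v v - dot u v ^+ 2 =
  dot v v * (dot u u - dot u v / dot v v * dot u v -
   (dot u v / dot v v * dot u v - dot u v / dot v v * (dot u v / dot v v * dot v v))).
  by field; rewrite vn0.
by rewrite mulr_ge0 // ltW.
Qed.

Lemma cauchy_schwarz u v : `|dot u v| <= l2 u * l2 v.
Proof.
rewrite -sqrtrM ?dot_self_ge0 // -(sqrtr_sqr (dot u v)).
by rewrite ler_sqrt ?mulr_ge0 ?dot_self_ge0 // cauchy_schwarz_sqr.
Qed.

Lemma ler_dot u v : dot u v <= l2 u * l2 v.
Proof. exact: le_trans (ler_norm _) (cauchy_schwarz u v). Qed.

Lemma vec_dim0 : d = 0%N -> forall u v, u = v.
Proof. by move=> d0 u v; apply/matrixP => -[a ha]; exfalso; rewrite d0 in ha. Qed.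

Lemma l2_dim0 : d = 0%N -> forall v, l2 v = 0.
Proof. by move=> d0 v; rewrite (vec_dim0 d0 v 0) l2_0. Qed.

End Euclidean.

Section DirectionalDerivative.
Context {R : realType} {d : nat}.
Local Notation vec := 'cV[R]_d.
Implicit Types u v w x : vec.

Lemma vec_sum_ev v : v = \sum_j v j 0 *: ev j.
Proof.
apply/matrixP => i k; rewrite (ord1 k) summxE (bigD1 i) //= big1 => [|j ji].
  by rewrite !mxE !eqxx mulr1 addr0.
by rewrite !mxE eq_sym (negbTE ji) mulr0.
Qed.

Lemma derive_sum_ev (W : normedModType R) (f : vec -> W) x v :
  differentiable f x -> 'D_v f x = \sum_j v j 0 *: 'D_(ev j) f x.
Proof.
move=> df; rewrite deriveE // {1}(vec_sum_ev v) linear_sum.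
by apply: eq_bigr => j _; rewrite linearZ /= deriveE.
Qed.

Lemma derive_grad (f : vec -> R) x v :
  differentiable f x -> 'D_v f x = dot (grad f x) v.
Proof.
by move=> df; rewrite derive_sum_ev //; apply: eq_bigr => j _; rewrite mxE mulrC.
Qed.

Lemma derive_jac (G : vec -> vec) x v :
  differentiable G x -> 'D_v G x = jac G x *m v.
Proof.
move=> dG; rewrite derive_sum_ev //; apply/matrixP => i k.
rewrite summxE !mxE (ord1 k); apply: eq_bigr => j _.
by rewrite !mxE mulrC.
Qed.

Lemma line_diff_quotientE (W : normedModType R) (f : vec -> W) x v t :
  (fun h : R => h^-1 *: (((fun s : R => f (x + s *: v)) \o shift t) (h *: 1)
                         - f (x + t *: v)))
  = (fun h : R => h^-1 *: ((f \o shift (x + t *: v)) (h *: v) - f (x + t *: v))).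
Proof.
apply/funext => h /=; congr (_ *: (f _ - _)).
by rewrite /shift /= [h *: 1]mulr1 scalerDl addrCA addrA.
Qed.

Lemma is_derive_line (W : normedModType R) (f : vec -> W) x v t :
  differentiable f (x + t *: v) ->
  is_derive t 1 (fun s : R => f (x + s *: v)) ('D_v f (x + t *: v)).
Proof.
move=> /diff_derivable df.
by split; rewrite /derivable /derive line_diff_quotientE //; apply: df.
Qed.

Lemma is_derive_line_grad (f : vec -> R) x v t :
  differentiable f (x + t *: v) ->
  is_derive t 1 (fun s : R => f (x + s *: v)) (dot (grad f (x + t *: v)) v).
Proof. by move=> df; rewrite -derive_grad //; exact: is_derive_line. Qed.

Lemma is_derive_line_dot (G : vec -> vec) x v w t :
  differentiable G (x + t *: v) ->
  is_derive t 1 (fun s : R => dot (G (x + s *: v)) w)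
     (dot (jac G (x + t *: v) *m v) w).
Proof.
move=> dG; have [dGt DGt] := is_derive_line dG.
have entry k : is_derive t 1 (fun s : R => G (x + s *: v) k 0)
                 (('D_v G (x + t *: v)) k 0).
  split; first by move/derivable_mxP: dGt; apply.
  by rewrite -DGt (derive_mx dGt) mxE.
have -> : (fun s : R => dot (G (x + s *: v)) w) =
          \sum_(k < d) (fun s : R => w k 0 * G (x + s *: v) k 0).
  by rewrite fct_sumE; apply/funext => s; apply: eq_bigr => k _; rewrite mulrC.
rewrite -derive_jac // /dot; apply: is_derive_sum => k.
by rewrite [X in is_derive _ _ _ X]mulrC; exact: is_deriveZ.
Qed.

Lemma dot_grad_ge (f : vec -> R) x w c : differentiable f x ->
  (forall t : R, 0 < t -> t <= 1 -> t * c <= f (x + t *: w) - f x) ->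
  c <= dot (grad f x) w.
Proof.
move=> dfx lb; rewrite -derive_grad //; have df := diff_derivable dfx.
set q := fun h : R => h^-1 *: ((f \o shift x) (h *: w) - f x).
have q_right : q @ 0^'+ --> 'D_w f x.
  have q_punct : q @ 0^' --> 'D_w f x by exact: df.
  apply: cvg_trans q_punct.
  have pos_neq0 : (fun u : R => 0 < u) `<=` (fun u : R => u != 0).
    by move=> u /= u0; rewrite gt_eqF.
  apply: cvg_app; exact: (@within_subset R _ _ (nbhs (0:R)) _ pos_neq0).
apply: (cvgr_to_ge q_right); near=> t.
have t0 : 0 < t by near: t; exact: nbhs_right_gt.
have t1 : t <= 1 by near: t; exact: nbhs_right_le ltr01.
rewrite /q /= /shift [_ *: _]mulrC [_ + x]addrC ler_pdivlMr // mulrC.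
exact: lb.
Unshelve. all: by end_near.
Qed.

End DirectionalDerivative.

Section RealLine.
Context {R : realType}.

Lemma MVT_open (f df : R -> R) (a b : R) : a < b ->
  (forall t : R, is_derive t 1 f (df t)) ->
  exists2 c, a < c < b & f b - f a = df c * (b - a).
Proof.
move=> ab fD.
have fC : {within `[a, b], continuous f}.
  apply: continuous_subspaceT => x; have [/derivable1_diffP dfx _] := fD x.
  exact: differentiable_continuous.
have [c cab E] := MVT ab (fun x _ => fD x) fC.
by exists c => //; rewrite -in_itv.
Qed.

Lemma is_derive_sub_quadratic (f : R -> R) (df c k t : R) : is_derive t 1 f df ->
  is_derive t 1 (fun s => f s - s * c - k * (s * s)) (df - c - k * (2 * t)).
Proof.
move=> fD.
have linD : is_derive t 1 (fun s : R => s * c) c.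
  have -> : (fun s : R => s * c) = c \*: id by apply/funext => s /=; rewrite mulrC.
  by have := is_deriveZ c (is_derive_id t (1:R)); rewrite [c *: (1:R)]mulr1.
have quadD : is_derive t 1 (fun s : R => k * (s * s)) (k * (2 * t)).
  have -> : (fun s : R => k * (s * s)) = k \*: (id * id) by apply/funext.
  have := is_deriveZ k (is_deriveM (is_derive_id t (1:R)) (is_derive_id t (1:R))).
  rewrite /= ![t *: (1:R)]mulr1.
  by have -> : k * (2 * t) = k *: (t + t) by rewrite [_ *: _]/GRing.scale /=; ring.
have -> : (fun s => f s - s * c - k * (s * s)) =
          (f - (fun s : R => s * c)) - (fun s : R => k * (s * s)) by apply/funext.
exact: is_deriveB (is_deriveB fD linD) quadD.
Qed.

Lemma taylor1_remainder_le (f df : R -> R) (K : R) :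
  (forall t : R, is_derive t 1 f (df t)) ->
  (forall t, 0 <= t <= 1 -> `|df t - df 0| <= K * t) ->
  `|f 1 - f 0 - df 0| <= K / 2.
Proof.
move=> fD dfK.
have [c /andP[c0 c1] Ec] := MVT_open ltr01
  (fun t => is_derive_sub_quadratic (df 0) (K / 2) (fD t)).
have [c' /andP[c0' c1'] Ec'] := MVT_open ltr01
  (fun t => is_derive_sub_quadratic (df 0) (- (K / 2)) (fD t)).
have := dfK c; rewrite (ltW c0) (ltW c1) ler_norml => /(_ isT) /andP[lc uc].
have := dfK c'; rewrite (ltW c0') (ltW c1') ler_norml => /(_ isT) /andP[lc' uc'].
rewrite !mul0r !mul1r !mulr0 subr0 !subr0 mulr1 in Ec Ec'.
rewrite ler_norml; apply/andP; split; lra.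
Qed.

Lemma le0_small_bound (a K : R) :
  (forall s, 0 < s -> s <= 1 -> a <= s * K) -> a <= 0.
Proof.
move=> aK; rewrite leNgt; apply/negP => a0.
have K0 : a <= K by have := aK 1 ltr01 (lexx _); rewrite mul1r.
have Kp : 0 < K by apply: lt_le_trans K0.
have s0 : 0 < a / (2 * K) by rewrite divr_gt0 // mulr_gt0.
have s1 : a / (2 * K) <= 1 by rewrite ler_pdivrMr ?mulr_gt0 // mul1r; lra.
have := aK _ s0 s1.
have -> : a / (2 * K) * K = a / 2 by field; rewrite gt_eqF.
lra.
Qed.

Lemma eq0_small_bound (a K : R) :
  (forall s, 0 < s -> s <= 1 -> `|a| <= s * K) -> a = 0.
Proof. by move=> aK; apply/eqP; rewrite -normr_le0; exact: le0_small_bound aK. Qed.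

Lemma ge0_linear_coef (A B : R) :
  (forall t, 0 < t -> t <= 1 -> 0 <= t * A + t ^+ 2 * B) -> 0 <= A.
Proof.
move=> AB; rewrite -oppr_le0; apply: (@le0_small_bound _ `|B|) => s s0 s1.
have := AB s s0 s1; rewrite expr2 -mulrA -mulrDr pmulr_rge0 // => sAB.
have : s * B <= s * `|B| by apply: ler_wpM2l; [exact: ltW | exact: ler_norm].
lra.
Qed.

Lemma ler_norm_mul_sub (a p q s E1 E2 : R) : 0 <= s ->
  `|a - s * p| <= E1 -> `|p - q| <= E2 ->
  `|a * s - s ^+ 2 * q| <= s * E1 + s ^+ 2 * E2.
Proof.
move=> s0 apE pqE.
have -> : a * s - s ^+ 2 * q = s * (a - s * p) + s ^+ 2 * (p - q) by ring.
apply: le_trans (ler_normD _ _) _.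
rewrite (normrM s) (normrM (s ^+ 2)) (ger0_norm s0) (ger0_norm (exprn_ge0 2 s0)).
by apply: lerD; apply: ler_wpM2l => //; exact: exprn_ge0.
Qed.

Lemma ler_norm_swap_second_difference (a b c e p q s K1 K2 : R) : 0 < s ->
  `|a - b - (c - e) - s ^+ 2 * p| <= s ^+ 3 * K1 ->
  `|a - c - (b - e) - s ^+ 2 * q| <= s ^+ 3 * K2 ->
  `|p - q| <= s * (K1 + K2).
Proof.
move=> s0 h1 h2; rewrite -(ler_pM2l (exprn_gt0 2 s0)).
rewrite -[X in X * `|_|](ger0_norm (exprn_ge0 2 (ltW s0))) -normrM.
by move: h1 h2; rewrite !ler_norml => /andP[? ?] /andP[? ?]; apply/andP; split; lra.
Qed.

Lemma ler_of_sqr_le (a b c : R) : 0 <= a -> 0 <= b ->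
  c * a ^+ 2 <= b * a -> c * a <= b.
Proof.
move=> a0 b0 le; have [a_eq0|an0] := eqVneq a 0; first by rewrite a_eq0 mulr0.
have ap : 0 < a by rewrite lt_def an0 a0.
by rewrite -(ler_pM2r ap) -mulrA -expr2.
Qed.

End RealLine.

Section Lipschitz.
Context {R : realType} {d : nat}.
Local Notation vec := 'cV[R]_d.
Implicit Types x y v : vec.

Lemma l2_mulmx_le_frobenius (A : 'M[R]_d) v :
  l2 (A *m v) <= Num.sqrt (\sum_i dot (row i A)^T (row i A)^T) * l2 v.
Proof.
have rows_ge0 : 0 <= \sum_i dot (row i A)^T (row i A)^T.
  by apply: sumr_ge0 => i _; exact: dot_self_ge0.
rewrite /l2 -sqrtrM // ler_sqrt ?mulr_ge0 ?dot_self_ge0 //.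
rewrite /dot mulr_suml; apply: ler_sum => i _.
have -> : (A *m v) i 0 = dot (row i A)^T v.
  by rewrite !mxE; apply: eq_bigr => j _; rewrite !mxE.
by rewrite -expr2 cauchy_schwarz_sqr.
Qed.

Lemma opnorm_ub (A : 'M[R]_d) v : v != 0 -> l2 (A *m v) / l2 v <= opnorm A.
Proof.
move=> v0; apply: sup_upper_bound; last by exists v.
split; first by exists (l2 (A *m v) / l2 v); exists v.
exists (Num.sqrt (\sum_i dot (row i A)^T (row i A)^T)) => r [u [u0 ->]].
by rewrite ler_pdivrMr ?l2_gt0 // l2_mulmx_le_frobenius.
Qed.

Lemma l2_mulmx_le_opnorm (A : 'M[R]_d) v : l2 (A *m v) <= opnorm A * l2 v.
Proof.
have [->|v0] := eqVneq v 0; first by rewrite mulmx0 l2_0 mulr0.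
by rewrite -ler_pdivrMr ?l2_gt0 // opnorm_ub.
Qed.

Lemma ev_neq0 (j : 'I_d) : ev j != 0 :> vec.
Proof.
apply/negP => /eqP /matrixP /(_ j 0) /eqP.
by rewrite /ev !mxE !eqxx oner_eq0.
Qed.

Lemma opnorm_ge0 (A : 'M[R]_d) : (0 < d)%N -> 0 <= opnorm A.
Proof.
move=> d0; have ej0 := ev_neq0 (Ordinal d0).
by apply: le_trans (opnorm_ub A ej0); rewrite divr_ge0 ?l2_ge0.
Qed.

Lemma l2_LipM (H : vec -> 'M[R]_d) (C : R) : (LipM H <= C%:E)%E ->
  forall x y v, l2 ((H x - H y) *m v) <= C * l2 (x - y) * l2 v.
Proof.
move=> HC x y v.
have [->|xy] := eqVneq x y; first by rewrite !subrr mul0mx l2_0 mulr0 mul0r.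
have xyp : 0 < l2 (x - y) by rewrite l2_gt0 // subr_eq0.
apply: le_trans (l2_mulmx_le_opnorm _ _) _; rewrite ler_wpM2r ?l2_ge0 //.
rewrite -ler_pdivrMr // -lee_fin; apply: le_trans HC.
by apply: ereal_sup_ubound; exists x, y.
Qed.

Lemma l2_LipV (G : vec -> vec) (C : R) : (LipV G <= C%:E)%E ->
  forall x y, l2 (G x - G y) <= C * l2 (x - y).
Proof.
move=> GC x y.
have [->|xy] := eqVneq x y; first by rewrite !subrr l2_0 mulr0.
have xyp : 0 < l2 (x - y) by rewrite l2_gt0 // subr_eq0.
rewrite -ler_pdivrMr // -lee_fin; apply: le_trans GC.
by apply: ereal_sup_ubound; exists x, y.
Qed.

Lemma LipV_ge0 (G : vec -> vec) : (0 < d)%N -> (0 <= LipV G)%E.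
Proof.
move=> d0; pose e : vec := ev (Ordinal d0).
apply: le_trans (_ : ((l2 (G 0 - G e) / l2 (0 - e))%:E <= _)%E).
  by rewrite lee_fin divr_ge0 // l2_ge0.
by apply: ereal_sup_ubound; exists 0, e; rewrite eq_sym ev_neq0.
Qed.

Lemma LipM_ge0 (H : vec -> 'M[R]_d) : (0 < d)%N -> (0 <= LipM H)%E.
Proof.
move=> d0; pose e : vec := ev (Ordinal d0).
apply: le_trans (_ : ((opnorm (H 0 - H e) / l2 (0 - e))%:E <= _)%E).
  by rewrite lee_fin divr_ge0 ?l2_ge0 ?opnorm_ge0.
by apply: ereal_sup_ubound; exists 0, e; rewrite eq_sym ev_neq0.
Qed.

Lemma fine_LipV_ge0 (G : vec -> vec) : 0 <= fine (LipV G).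
Proof.
have [d0|dp] := posnP d; last exact/fine_ge0/LipV_ge0.
rewrite /LipV; have -> : [set r | exists x y : vec, x != y /\
                          r = (l2 (G x - G y) / l2 (x - y))%:E] = set0.
  apply/seteqP; split => // r [x [y [xy _]]].
  by rewrite (vec_dim0 d0 x y) eqxx in xy.
by rewrite ereal_sup0.
Qed.

Lemma LipV_le_fine (G : vec -> vec) : (0 < d)%N -> (LipV G < +oo)%E ->
  (LipV G <= (fine (LipV G))%:E)%E.
Proof. by move=> dp GC; rewrite fineK // ge0_fin_numE ?LipV_ge0. Qed.

End Lipschitz.

Section ConvexAnalysis.
Context {R : realType} {d : nat}.
Local Notation vec := 'cV[R]_d.
Implicit Types u v w x y : vec.

Lemma subdiff_grad (f : vec -> R) y u : differentiable f y ->
  subdiff f y u -> u = grad f y.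
Proof.
move=> df fu; set w := u - grad f y.
have uw_le : dot u w <= dot (grad f y) w.
  apply: dot_grad_ge => // t t0 t1.
  by have := fu (y + t *: w); rewrite [y + _]addrC addrK dotZr -lerBrDl.
apply/eqP; rewrite -subr_eq0; apply/eqP/dot_self_eq0/le_anti.
by rewrite dot_self_ge0 andbT dotBl subr_le0.
Qed.

Lemma grad_subdiff (nu : R -> R) (f : vec -> R) :
  (forall x, differentiable f x) -> grad_growth nu f ->
  forall y, subdiff f y (grad f y).
Proof.
by move=> df [fsub _] y; have [u fu] := fsub y; rewrite -(subdiff_grad (df y) fu).
Qed.

Lemma subdiff_convex (f : vec -> R) : (forall x, subdiff f x !=set0) ->
  forall x y (t : R), 0 <= t -> t <= 1 ->
  f (x + t *: (y - x)) <= (1 - t) * f x + t * f y.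
Proof.
move=> fsub x y t t0 t1; set z := x + t *: (y - x).
have [u fu] := fsub z; have := fu x; have := fu y.
have -> : x - z = - t *: (y - x) by rewrite /z opprD addrA subrr add0r scaleNr.
have -> : y - z = (1 - t) *: (y - x) by rewrite /z scalerBl scale1r opprD addrA.
rewrite !dotZr; move: (f z) (f x) (f y) (dot u (y - x)) => a b c e hy hx.
have t1' : 0 <= 1 - t by rewrite subr_ge0.
have := ler_wpM2l t0 hy; have := ler_wpM2l t1' hx.
have : (1 - t) * (a + - t * e) + t * (a + (1 - t) * e) = a by ring.
lra.
Qed.

Lemma argmin_add_subdiff (F l : vec -> R) (k : R) h : 0 < k ->
  (forall x, subdiff F x !=set0) -> differentiable l h ->
  is_argmin (fun b => F b + k * l b) h -> subdiff F h (- k *: grad l h).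
Proof.
move=> k0 Fsub dl hmin y; rewrite dotZl mulNr.
suff : (F h - F y) / k <= dot (grad l h) (y - h).
  by rewrite ler_pdivrMr // [_ * k]mulrC; lra.
apply: dot_grad_ge => // t t0 t1; rewrite mulrA ler_pdivrMr //.
have := subdiff_convex Fsub h y (ltW t0) t1; have /= := hmin (h + t *: (y - h)).
move: (F _) (l _) => Fz lz; lra.
Qed.

Lemma argmin_convex_optimality (L pi : vec -> R) (lam : R) m :
  0 <= lam -> convex_fun pi -> differentiable L m ->
  is_argmin (fun b => L b + lam * pi b) m ->
  forall y, 0 <= dot (grad L m) (y - m) + lam * (pi y - pi m).
Proof.
move=> lam0 cvx dL mmin y; rewrite -lerBlDr sub0r.
apply: dot_grad_ge => // t t0 t1.
have -> : m + t *: (y - m) = t *: y + (1 - t) *: m.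
  by rewrite scalerBr scalerBl scale1r addrCA addrC.
have := ler_wpM2l lam0 (cvx y m t (ltW t0) t1); have /= := mmin (t *: y + (1 - t) *: m).
move: (pi _) (L _) => piz Lz; lra.
Qed.

Lemma quad_formBZ (a w : vec) (H : 'M[R]_d) (t : R) :
  dot (a - t *: w) (H *m (a - t *: w)) =
  dot a (H *m a) - t * dot a (H *m w) - t * dot w (H *m a) + t ^+ 2 * dot w (H *m w).
Proof.
rewrite mulmxBr !dotBl !dotBr -!scalemxAr !dotZl !dotZr.
by move: (dot a _) (dot a _) (dot w _) (dot w _) => q1 q2 q3 q4; rewrite expr2; ring.
Qed.

Lemma prox_optimality (H : 'M[R]_d) (G bh : vec) (pi : vec -> R) (lam : R) p :
  0 <= lam -> convex_fun pi ->
  is_argmin (fun b => 2^-1 * dot (bh - b) (H *m (bh - b)) + dot b G + lam * pi b) p ->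
  forall y, 0 <= 2^-1 * (dot (p - bh) (H *m (y - p)) + dot (y - p) (H *m (p - bh)))
                 + dot (y - p) G + lam * (pi y - pi p).
Proof.
move=> lam0 cvx pmin y; set w := y - p.
apply: (@ge0_linear_coef _ _ (2^-1 * dot w (H *m w))) => t t0 t1.
have /= := pmin (p + t *: w).
have -> : bh - (p + t *: w) = (bh - p) - t *: w by rewrite opprD addrA.
rewrite quad_formBZ (dotDl p) dotZl.
have -> : p + t *: w = t *: y + (1 - t) *: p.
  by rewrite /w scalerBr scalerBl scale1r addrCA addrC.
have := ler_wpM2l lam0 (cvx y p t (ltW t0) t1).
have -> : dot (p - bh) (H *m w) = - dot (bh - p) (H *m w) by rewrite -dotNl opprB.
have -> : dot w (H *m (p - bh)) = - dot w (H *m (bh - p)).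
  by rewrite -dotNr -mulmxN opprB.
lra.
Qed.

Lemma argmin_perturb_le (F l : vec -> R) (k c : R) h m : 0 < k ->
  differentiable l h -> grad_growth (fun r => c * r ^+ 2) F ->
  is_argmin (fun b => F b + k * l b) h -> is_argmin F m ->
  c * l2 (m - h) <= k * l2 (grad l h).
Proof.
move=> k0 dl [Fsub Fgrowth] hmin mmin.
have Fh := argmin_add_subdiff k0 Fsub dl hmin.
have Fm : subdiff F m 0 by move=> y; rewrite dot0l addr0.
have := Fgrowth m h _ _ Fh Fm; rewrite subr0 dotZr mulNr => growth.
apply: ler_of_sqr_le; [exact: l2_ge0 | by rewrite mulr_ge0 ?l2_ge0 // ltW |].
apply: le_trans growth _; rewrite -mulrN -dotNl opprB -mulrA ler_wpM2l ?(ltW k0) //.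
by rewrite mulrC ler_dot.
Qed.

End ConvexAnalysis.

Section Taylor.
Context {R : realType} {d : nat}.
Local Notation vec := 'cV[R]_d.
Implicit Types u v w x y : vec.

Lemma taylor_LipV_grad (f : vec -> R) (Lp : R) x v :
  (forall y, differentiable f y) ->
  (forall x y, l2 (grad f x - grad f y) <= Lp * l2 (x - y)) ->
  `|f (x + v) - f x - dot (grad f x) v| <= Lp * l2 v ^+ 2 / 2.
Proof.
move=> df fLip.
have := @taylor1_remainder_le R (fun s => f (x + s *: v))
  (fun s => dot (grad f (x + s *: v)) v) (Lp * l2 v ^+ 2)
  (fun t => is_derive_line_grad (df _)).
rewrite /= scale1r scale0r addr0; apply=> t /andP[t0 _].
rewrite -dotBl; apply: le_trans (cauchy_schwarz _ _) _.
apply: le_trans (ler_wpM2r (l2_ge0 _) (fLip _ _)) _.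
by rewrite [x + _]addrC addrK l2Z ger0_norm // expr2; lra.
Qed.

Lemma loss_increment_le (l : vec -> R) (Lp : R) h m p :
  (forall x, differentiable l x) ->
  (forall x y, l2 (grad l x - grad l y) <= Lp * l2 (x - y)) ->
  `|l p - l m| <= l2 (grad l h) * l2 (p - m) + Lp * l2 (m - h) * l2 (p - m)
                  + Lp * l2 (p - m) ^+ 2 / 2.
Proof.
move=> dl lLip.
have rem := taylor_LipV_grad m (p - m) dl lLip.
have mpm : m + (p - m) = p by rewrite addrC subrK.
rewrite mpm in rem.
have lin : `|dot (grad l m) (p - m)|
           <= l2 (grad l h) * l2 (p - m) + Lp * l2 (m - h) * l2 (p - m).
  rewrite -(subrK (grad l h) (grad l m)) dotDl addrC.
  apply: le_trans (ler_normD _ _) _; apply: lerD; first exact: cauchy_schwarz.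
  by apply: le_trans (cauchy_schwarz _ _) _; rewrite ler_wpM2r ?l2_ge0 ?lLip.
rewrite -(subrK (dot (grad l m) (p - m)) (l p - l m)) addrC.
by apply: le_trans (ler_normD _ _) _; exact: lerD.
Qed.

End Taylor.

Section LipschitzHessian.
Context {R : realType} {d : nat}.
Local Notation vec := 'cV[R]_d.
Implicit Types u v w x y : vec.

Variables (L : vec -> R) (C : R).
Hypothesis dL : forall x, differentiable L x.
Hypothesis dG : forall x, differentiable (grad L) x.
Hypothesis C_ge0 : 0 <= C.
Hypothesis hessLip :
  forall x y v, l2 ((hess L x - hess L y) *m v) <= C * l2 (x - y) * l2 v.

Lemma taylor_hess_le x v w :
  `|dot (grad L (x + v) - grad L x - hess L x *m v) w| <= C / 2 * (l2 v ^+ 2 * l2 w).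
Proof.
have hessD t : 0 <= t <= 1 ->
    `|dot (hess L (x + t *: v) *m v) w - dot (hess L (x + 0 *: v) *m v) w|
    <= C * (l2 v ^+ 2 * l2 w) * t.
  move=> /andP[t0 _]; rewrite scale0r addr0 -dotBl -mulmxBl.
  apply: le_trans (cauchy_schwarz _ _) _.
  apply: le_trans (ler_wpM2r (l2_ge0 _) (hessLip _ _ _)) _.
  by rewrite [x + _]addrC addrK l2Z ger0_norm // expr2; lra.
have := taylor1_remainder_le (fun t => is_derive_line_dot w (dG _)) hessD.
by rewrite /= scale1r scale0r addr0 -!dotBl mulrAC.
Qed.

Lemma mvt_line_difference (a b : vec) u (s : R) : 0 < s ->
  exists2 c, 0 < c < s &
    (L (a + s *: u) - L (b + s *: u)) - (L a - L b) =
    (dot (grad L (a + c *: u)) u - dot (grad L (b + c *: u)) u) * s.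
Proof.
move=> s0.
have D (t : R) : is_derive t 1 ((fun r : R => L (a + r *: u)) - (fun r => L (b + r *: u)))
             (dot (grad L (a + t *: u)) u - dot (grad L (b + t *: u)) u).
  by apply: is_deriveB; exact: is_derive_line_grad.
have [c cs E] := MVT_open s0 D.
by exists c => //; rewrite subr0 in E; rewrite -E !fctE !scale0r !addr0.
Qed.

Lemma second_difference_le x u v (s : R) : 0 < s ->
  `|(L (x + s *: v + s *: u) - L (x + s *: u)) - (L (x + s *: v) - L x)
    - s ^+ 2 * dot (hess L x *m v) u|
  <= s ^+ 3 * (C / 2 * (l2 v ^+ 2 * l2 u) + C * (l2 u ^+ 2 * l2 v)).
Proof.
move=> s0; have [c /andP[c0 cs] ->] := mvt_line_difference (x + s *: v) x u s0.
have yx : l2 (x + c *: u - x) <= s * l2 u.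
  by rewrite addrAC subrr add0r l2Z (ger0_norm (ltW c0)) ler_wpM2r ?l2_ge0 ?(ltW cs).
have -> : x + s *: v + c *: u = (x + c *: u) + s *: v by rewrite addrAC.
move: (x + c *: u) yx => y yx.
have rem := taylor_hess_le y (s *: v) u.
rewrite l2Z (ger0_norm (ltW s0)) !dotBl -scalemxAr dotZl in rem.
have lip : `|dot (hess L y *m v) u - dot (hess L x *m v) u|
           <= C * (s * l2 u) * l2 v * l2 u.
  rewrite -dotBl -mulmxBl; apply: le_trans (cauchy_schwarz _ _) _.
  rewrite ler_wpM2r ?l2_ge0 //; apply: le_trans (hessLip _ _ _) _.
  by rewrite ler_wpM2r ?l2_ge0 // ler_wpM2l.
apply: le_trans (ler_norm_mul_sub (ltW s0) rem lip) _.
by rewrite !expr2 exprS expr2; lra.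
Qed.

Lemma hess_sym x u v : dot (hess L x *m v) u = dot (hess L x *m u) v.
Proof.
(* Both orders of the mixed second difference of [L] at [x] agree with
   [s ^+ 2] times the Hessian form up to [O (s ^+ 3)]. *)
apply/eqP; rewrite -subr_eq0; apply/eqP.
apply: (@eq0_small_bound _ _ (C / 2 * (l2 v ^+ 2 * l2 u) + C * (l2 u ^+ 2 * l2 v)
         + (C / 2 * (l2 u ^+ 2 * l2 v) + C * (l2 v ^+ 2 * l2 u)))) => s s0 _.
have swap := second_difference_le x v u s0.
have uv : x + s *: u + s *: v = x + s *: v + s *: u by rewrite addrAC.
rewrite uv in swap.
exact: ler_norm_swap_second_difference s0 (second_difference_le x u v s0) swap.
Qed.

Lemma hess_quad_ge (c : R) : grad_growth (fun r => c * r ^+ 2) L ->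
  forall x v, c * l2 v ^+ 2 <= dot (hess L x *m v) v.
Proof.
move=> Lgrowth x v; rewrite -subr_le0.
apply: (@le0_small_bound _ _ (C / 2 * l2 v ^+ 3)) => t t0 _.
have Lsub := grad_subdiff dL Lgrowth.
have growth := Lgrowth.2 x (x + t *: v) _ _ (Lsub _) (Lsub _).
rewrite opprD addrA subrr add0r l2N l2Z (ger0_norm (ltW t0)) in growth.
have xtvx : x + t *: v - x = t *: v by rewrite addrC addKr.
rewrite xtvx dotZl dotC in growth.
have rem := ler_normlW (taylor_hess_le x (t *: v) v).
rewrite l2Z (ger0_norm (ltW t0)) -scalemxAr (dotBl (_ - _)) dotZl in rem.
rewrite -(ler_pM2l (exprn_gt0 2 t0)).
have := ler_wpM2l (ltW t0) rem.
rewrite !expr2 exprS expr2; lra.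
Qed.

Lemma prox_newton_le (pi : vec -> R) (c lam : R) h m p :
  0 <= lam -> convex_fun pi -> grad_growth (fun r => c * r ^+ 2) L ->
  is_argmin (fun b => L b + lam * pi b) m ->
  is_argmin (fun b => 2^-1 * dot (h - b) (hess L h *m (h - b))
                      + dot b (grad L h) + lam * pi b) p ->
  2 * c * l2 (p - m) <= C * l2 (m - h) ^+ 2.
Proof.
move=> lam0 cvx Lgrowth mmin pmin.
have opt_p := prox_optimality lam0 cvx pmin m.
have opt_m := argmin_convex_optimality lam0 cvx (dL m) mmin p.
have := taylor_hess_le h (m - h) (m - p).
rewrite ler_norml => /andP[rem _].
have quad := hess_quad_ge Lgrowth h (m - p).
have hmh : h + (m - h) = m by rewrite addrC subrK.
rewrite hmh in rem.
have ph : p - h = (m - h) - (m - p) by rewrite opprB [RHS]addrC addrA subrK.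
have sym_p : dot (p - h) (hess L h *m (m - p))
    = dot (m - p) (hess L h *m (m - h)) - dot (hess L h *m (m - p)) (m - p).
  rewrite ph dotBl (dotC (m - h)) hess_sym (dotC (hess L h *m (m - h))).
  by rewrite (dotC (m - p) (hess L h *m (m - p))).
have sym_p' : dot (m - p) (hess L h *m (p - h))
    = dot (m - p) (hess L h *m (m - h)) - dot (hess L h *m (m - p)) (m - p).
  by rewrite -sym_p dotC hess_sym dotC.
rewrite sym_p sym_p' in opt_p.
rewrite !dotBl (dotC (grad L h)) (dotC (hess L h *m (m - h))) in rem.
have pm : dot (grad L m) (p - m) = - dot (grad L m) (m - p) by rewrite -dotNr opprB.
rewrite pm in opt_m.
(* Summing the optimality conditions of [p] and [m] cancels the [lam * pi] terms,
   and the Taylor remainder of [grad L] between [h] and [m] bounds what is left. *)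
have key : c * l2 (m - p) ^+ 2 <= C / 2 * (l2 (m - h) ^+ 2 * l2 (m - p)) by lra.
rewrite l2_distC; apply: ler_of_sqr_le; first exact: l2_ge0.
  by rewrite mulr_ge0 // exprn_ge0 // l2_ge0.
lra.
Qed.

End LipschitzHessian.

Lemma lincomb_smooth {R : realType} {d n : nat} (f : 'I_n -> 'cV[R]_d -> R)
    (c : 'I_n -> R) :
  (forall j x, differentiable (f j) x) -> (forall j x, differentiable (grad (f j)) x) ->
  (forall x, differentiable (fun b => \sum_j c j * f j b) x) /\
  (forall x, differentiable (grad (fun b => \sum_j c j * f j b)) x).
Proof.
move=> df dgf.
have fE : (fun b => \sum_j c j * f j b) = \sum_j (c j *: f j) by rewrite fct_sumE.
have gradE : grad (fun b => \sum_j c j * f j b) = \sum_j (c j *: grad (f j)).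
  rewrite fct_sumE fE; apply/funext => x; apply/matrixP => k k'.
  rewrite (ord1 k') /grad !mxE summxE derive_sum; last first.
    by move=> j; apply/diff_derivable/differentiableZ.
  by apply: eq_bigr => j _; rewrite !mxE deriveZ //; exact: diff_derivable.
by split => x; [rewrite fE | rewrite gradE];
  apply: differentiable_sum => j; exact: differentiableZ.
Qed.

Lemma loo_bound_combine {R : realType} (k c C Lp g a dl X : R) :
  0 < k -> 0 < c -> 0 <= C -> 0 <= Lp -> 0 <= g -> 0 <= a -> 0 <= dl ->
  c * a <= k * g -> 2 * c * dl <= C * a ^+ 2 ->
  X <= g * dl + Lp * a * dl + Lp * dl ^+ 2 / 2 ->
  X <= C * k ^+ 2 * g ^+ 3 / (2 * c ^+ 3) + C * Lp * k ^+ 3 * g ^+ 3 / (2 * c ^+ 4)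
       + C ^+ 2 * Lp * k ^+ 4 * g ^+ 4 / (8 * c ^+ 6).
Proof.
move=> k0 c0 C0 Lp0 g0 a0 dl0 aA dlD Xle.
set A := k * g / c; set D := C * A ^+ 2 / (2 * c).
have aA' : a <= A by rewrite /A ler_pdivlMr // mulrC.
have A0 : 0 <= A := le_trans a0 aA'.
have dlD' : dl <= D.
  rewrite /D ler_pdivlMr ?mulr_gt0 // mulrC; apply: le_trans dlD _.
  by rewrite ler_wpM2l // ler_pXn2r // nnegrE.
have D0 : 0 <= D := le_trans dl0 dlD'.
have -> : C * k ^+ 2 * g ^+ 3 / (2 * c ^+ 3) + C * Lp * k ^+ 3 * g ^+ 3 / (2 * c ^+ 4)
        + C ^+ 2 * Lp * k ^+ 4 * g ^+ 4 / (8 * c ^+ 6)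
        = g * D + Lp * A * D + Lp * D ^+ 2 / 2.
  by rewrite /D /A; field; rewrite gt_eqF.
apply: le_trans Xle _; apply: lerD; first apply: lerD.
- exact: ler_wpM2l.
- by apply: ler_pM => //; [exact: mulr_ge0 | exact: ler_wpM2l].
- by rewrite ler_wpM2r // ler_wpM2l // ler_pXn2r // nnegrE.
Qed.

Section LeaveOneOut.
Context {R : realType} {d n : nat} {Z : Type}.
Local Notation vec := 'cV[R]_d.
Variables (z : 'I_n -> Z) (ell : Z -> vec -> R) (pi : vec -> R).
Hypothesis n_gt0 : (0 < n)%N.
Hypothesis ell_diff : forall zz x, differentiable (ell zz) x.
Hypothesis grad_ell_diff : forall zz x, differentiable (grad (ell zz)) x.

Lemma lossPm_smooth i :
  (forall x, differentiable (lossPm z ell i) x) /\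
  (forall x, differentiable (grad (lossPm z ell i)) x).
Proof.
have -> : lossPm z ell i = fun b => \sum_j (n%:R^-1 * (j != i)%:R) * ell (z j) b.
  apply/funext => b; rewrite /lossPm big_mkcond /= mulr_sumr.
  by apply: eq_bigr => j _; case: (j != i); rewrite ?mulr1 ?mulr0 ?mul0r.
exact: lincomb_smooth.
Qed.

Lemma mPnE i lam b :
  mPn z ell pi lam b = mPm z ell pi i lam b + n%:R^-1 * ell (z i) b.
Proof.
rewrite /mPn /mPm /lossPn /lossPm (bigD1 i) //= mulrDr.
by move: (ell _ b) (\sum_(j < n | j != i) _) => a s; ring.
Qed.

Lemma loo_loss_gap_le (lam cm C : R) (bh bm bp : vec) i :
  0 <= lam -> 0 < cm -> 0 <= C -> convex_fun pi ->
  is_argmin (mPn z ell pi lam) bh -> is_argmin (mPm z ell pi i lam) bm ->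
  is_argmin (prox_obj z ell pi bh i lam) bp ->
  grad_growth (fun r => cm * r ^+ 2) (mPm z ell pi i lam) ->
  grad_growth (fun r => cm * r ^+ 2) (mPm z ell pi i 0) ->
  (LipM (hess (lossPm z ell i)) <= C%:E)%E ->
  (l2 (grad (ell (z i)) bh) != 0 -> (LipV (grad (ell (z i))) < +oo)%E) ->
  `|ell (z i) bp - ell (z i) bm| <=
    C * n%:R^-1 ^+ 2 * l2 (grad (ell (z i)) bh) ^+ 3 / (2 * cm ^+ 3)
    + C * fine (LipV (grad (ell (z i)))) * n%:R^-1 ^+ 3
        * l2 (grad (ell (z i)) bh) ^+ 3 / (2 * cm ^+ 4)
    + C ^+ 2 * fine (LipV (grad (ell (z i)))) * n%:R^-1 ^+ 4
        * l2 (grad (ell (z i)) bh) ^+ 4 / (8 * cm ^+ 6).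
Proof.
move=> lam0 cm0 C0 cvx hmin mmin pmin growth growth0 hessC LipV_fin.
have k0 : 0 < n%:R^-1 :> R by rewrite invr_gt0 ltr0n.
have [dL dG] := lossPm_smooth i.
have mPm0 : mPm z ell pi i 0 = lossPm z ell i.
  by apply/funext => b; rewrite /mPm mul0r addr0.
rewrite mPm0 in growth0.
have shift : cm * l2 (bm - bh) <= n%:R^-1 * l2 (grad (ell (z i)) bh).
  apply: argmin_perturb_le k0 (ell_diff _ bh) growth _ mmin => y /=.
  by rewrite -!mPnE; exact: hmin.
have newton : 2 * cm * l2 (bp - bm) <= C * l2 (bm - bh) ^+ 2.
  exact: (prox_newton_le (h := bh) dL dG C0 (l2_LipM hessC) lam0 cvx growth0 mmin pmin).
apply: (loo_bound_combine k0 cm0 C0 (fine_LipV_ge0 _) (l2_ge0 _) (l2_ge0 _) (l2_ge0 _)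
         shift newton).
(* [LipV (grad (ell (z i)))] may be infinite when [grad (ell (z i)) bh = 0],
   but then [bp = bm]. *)
have [g0|gn0] := eqVneq (l2 (grad (ell (z i)) bh)) 0.
  have a0 : l2 (bm - bh) = 0.
    apply/le_anti; rewrite l2_ge0 andbT -(pmulr_rle0 _ cm0).
    by rewrite g0 mulr0 in shift.
  have dl0 : l2 (bp - bm) = 0.
    have cm2 : 0 < 2 * cm by rewrite mulr_gt0.
    apply/le_anti; rewrite l2_ge0 andbT -(pmulr_rle0 _ cm2).
    by rewrite a0 expr0n /= mulr0 in newton.
  rewrite dl0 (subr0_eq (l2_eq0 dl0)) subrr normr0 expr0n /=.
  by rewrite !mulr0 mul0r !addr0.
have dpos : (0 < d)%N.
  by rewrite lt0n; apply: contra_neq gn0 => d0; exact: l2_dim0.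
apply: loss_increment_le; first exact: ell_diff.
exact: l2_LipV (LipV_le_fine dpos (LipV_fin gn0)).
Qed.

End LeaveOneOut.

Section LooConstants.
Context {R : realType} {d n : nat} {Z : Type}.
Local Notation vec := 'cV[R]_d.
Variables (z : 'I_n -> Z) (ell : Z -> vec -> R).

Definition Bsr_at (bh : vec) s r : \bar R := ((n%:R^-1)%:E *
  \sum_(i < n) (iter s (fun e => LipV (grad (ell (z i))) * e) 1
                * ((l2 (grad (ell (z i)) bh)) ^+ r)%:E))%E.

Lemma Bsr_at_le (Lam : set R) (bh : R -> vec) s r lam : Lam lam ->
  (Bsr_at (bh lam) s r <= Bsr z ell Lam bh s r)%E.
Proof. by move=> Llam; apply: ereal_sup_ubound; exists lam. Qed.

Lemma le_fine (x : R) (B : \bar R) : (x%:E <= B)%E -> (B < +oo)%E -> x <= fine B.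
Proof. by case: B. Qed.

Lemma mean_l2_grad_le_Bsr (Lam : set R) (bh : R -> vec) r lam : Lam lam ->
  (Bsr z ell Lam bh 0 r < +oo)%E ->
  n%:R^-1 * \sum_i l2 (grad (ell (z i)) (bh lam)) ^+ r <= fine (Bsr z ell Lam bh 0 r).
Proof.
move=> Llam Bfin; apply: le_fine Bfin; apply: le_trans (Bsr_at_le _ _ _ Llam).
rewrite /Bsr_at /=; under [X in (_ <= _ * X)%E]eq_bigr do rewrite mul1e.
by rewrite sumEFin -EFinM.
Qed.

Lemma mean_LipV_le_Bsr (Lam : set R) (bh : R -> vec) r lam : (0 < r)%N -> Lam lam ->
  (forall i, l2 (grad (ell (z i)) (bh lam)) != 0 -> (LipV (grad (ell (z i))) < +oo)%E) ->
  (Bsr z ell Lam bh 1 r < +oo)%E ->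
  n%:R^-1 * \sum_i fine (LipV (grad (ell (z i)))) * l2 (grad (ell (z i)) (bh lam)) ^+ r
  <= fine (Bsr z ell Lam bh 1 r).
Proof.
move=> r0 Llam LipV_fin Bfin; apply: le_fine Bfin; apply: le_trans (Bsr_at_le _ _ _ Llam).
rewrite /Bsr_at /= (eq_bigr (fun i => (fine (LipV (grad (ell (z i))))
                                      * l2 (grad (ell (z i)) (bh lam)) ^+ r)%:E)).
  by rewrite sumEFin -EFinM.
move=> i _; rewrite mule1.
have [g0|gn0] := eqVneq (l2 (grad (ell (z i)) (bh lam))) 0.
  by rewrite g0 expr0n; case: r r0 => // r _ /=; rewrite mule0 mulr0.
have dpos : (0 < d)%N.
  by rewrite lt0n; apply: contra_neq gn0 => d0; exact: l2_dim0.
have LipV_fin_num : LipV (grad (ell (z i))) \is a fin_num.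
  by rewrite ge0_fin_numE ?LipV_ge0 //; exact: LipV_fin.
by rewrite -{1}(fineK LipV_fin_num) EFinM.
Qed.

Lemma LipV_lt_pinfty_of_Bsr (Lam : set R) (bh : R -> vec) r lam : (0 < n)%N -> Lam lam ->
  (Bsr z ell Lam bh 1 r < +oo)%E ->
  forall i, l2 (grad (ell (z i)) (bh lam)) != 0 -> (LipV (grad (ell (z i))) < +oo)%E.
Proof.
move=> n0 Llam Bfin i gn0.
have dpos : (0 < d)%N.
  by rewrite lt0n; apply: contra_neq gn0 => d0; exact: l2_dim0.
rewrite ltey; apply: contra_ltN Bfin => /eqP LipV_oo; rewrite leye_eq.
pose F j := (iter 1 (fun e => LipV (grad (ell (z j))) * e) 1
             * ((l2 (grad (ell (z j)) (bh lam))) ^+ r)%:E)%E.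
have g_pos : 0 < l2 (grad (ell (z i)) (bh lam)) ^+ r.
  by rewrite exprn_gt0 // lt_def gn0 l2_ge0.
have F_ge0 j : (0 <= F j)%E.
  by rewrite /F /= mule1 mule_ge0 ?LipV_ge0 // lee_fin exprn_ge0 ?l2_ge0.
have Fi : F i = +oo%E by rewrite /F /= mule1 LipV_oo gt0_mulye ?lte_fin.
have sumF : (\sum_j F j = +oo)%E.
  by apply/eqP; rewrite eq_le leey -Fi (bigD1 i) //= leeDl // sume_ge0.
have := Bsr_at_le bh 1 r Llam.
by rewrite /Bsr_at -/F sumF muleC gt0_mulye ?lte_fin ?invr_gt0 ?ltr0n // leye_eq.
Qed.

Lemma Bsr_dim0 (Lam : set R) (bh : R -> vec) s r lam : d = 0%N -> Lam lam ->
  Bsr z ell Lam bh s r.+1 = 0%E.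
Proof.
move=> d0 Llam.
have at0 lam' : Bsr_at (bh lam') s r.+1 = 0%E.
  by rewrite /Bsr_at big1 ?mule0 // => i _; rewrite l2_dim0 // expr0n /= mule0.
apply/le_anti/andP; split; last by rewrite -(at0 lam) Bsr_at_le.
by apply: ge_ereal_sup => _ [lam' _ <-]; rewrite -/(Bsr_at (bh lam') s r.+1) at0.
Qed.

Lemma ProxACV_sub_CV_le (bp bm : 'I_n -> R -> vec) lam (F : 'I_n -> R) :
  (forall i, `|ell (z i) (bp i lam) - ell (z i) (bm i lam)| <= F i) ->
  `|ProxACV z ell bp lam - CV z ell bm lam| <= n%:R^-1 * \sum_i F i.
Proof.
move=> gap; have k0 : 0 <= n%:R^-1 :> R by rewrite invr_ge0 ler0n.
rewrite /ProxACV /CV -mulrBr -sumrB normrM ger0_norm // ler_wpM2l //.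
by apply: le_trans (ler_norm_sum _ _ _) _; exact: ler_sum.
Qed.

Lemma ProxACV_CV_dim0 (bp bm : 'I_n -> R -> vec) lam : d = 0%N ->
  ProxACV z ell bp lam = CV z ell bm lam.
Proof.
move=> d0; rewrite /ProxACV /CV; congr (_ * _); apply: eq_bigr => i _.
by rewrite (vec_dim0 d0 (bp i lam) (bm i lam)).
Qed.

End LooConstants.

Lemma mean_bound_le {R : realType} (n : nat) (g Lp : 'I_n -> R) (C cm B0 B1 B2 : R) :
  (0 < n)%N -> 0 < cm -> 0 <= C ->
  n%:R^-1 * \sum_i g i ^+ 3 <= B0 ->
  n%:R^-1 * \sum_i Lp i * g i ^+ 3 <= B1 ->
  n%:R^-1 * \sum_i Lp i * g i ^+ 4 <= B2 ->
  n%:R^-1 * \sum_i (C * n%:R^-1 ^+ 2 * g i ^+ 3 / (2 * cm ^+ 3)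
                    + C * Lp i * n%:R^-1 ^+ 3 * g i ^+ 3 / (2 * cm ^+ 4)
                    + C ^+ 2 * Lp i * n%:R^-1 ^+ 4 * g i ^+ 4 / (8 * cm ^+ 6))
  <= C / n%:R ^+ 2 * (B0 / (2 * cm ^+ 3) + B1 / (2 * n%:R * cm ^+ 4)
                      + C * B2 / (8 * n%:R ^+ 2 * cm ^+ 6)).
Proof.
move=> n0 cm0 C0 hA hB hE; set k := n%:R^-1 : R in hA hB hE *.
have k0 : 0 < k by rewrite invr_gt0 ltr0n.
rewrite (_ : \sum_i _ = C * k ^+ 2 / (2 * cm ^+ 3) * \sum_i g i ^+ 3
            + C * k ^+ 3 / (2 * cm ^+ 4) * \sum_i Lp i * g i ^+ 3
            + C ^+ 2 * k ^+ 4 / (8 * cm ^+ 6) * \sum_i Lp i * g i ^+ 4); last first.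
  by rewrite !mulr_sumr -!big_split; apply: eq_bigr => i _ /=; ring.
move: (\sum_i g i ^+ 3) (\sum_i Lp i * g i ^+ 3) (\sum_i Lp i * g i ^+ 4) hA hB hE.
move=> A B E hA hB hE.
rewrite (_ : k * _ = C / n%:R ^+ 2 * (k * A / (2 * cm ^+ 3)
           + k * B / (2 * n%:R * cm ^+ 4) + C * (k * E) / (8 * n%:R ^+ 2 * cm ^+ 6)));
  last first.
  by rewrite /k; field; rewrite !gt_eqF ?exprn_gt0 ?ltr0n.
have c3 : 0 < 2 * cm ^+ 3 by rewrite mulr_gt0 ?exprn_gt0.
have c4 : 0 < 2 * n%:R * cm ^+ 4 by rewrite !mulr_gt0 ?exprn_gt0 ?ltr0n.
have c6 : 0 < 8 * n%:R ^+ 2 * cm ^+ 6 by rewrite !mulr_gt0 ?exprn_gt0 ?ltr0n.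
rewrite ler_wpM2l ?divr_ge0 ?exprn_ge0 ?ler0n //.
apply: lerD; first apply: lerD.
- by rewrite ler_wpM2r // invr_ge0 ltW.
- by rewrite ler_wpM2r // invr_ge0 ltW.
- by rewrite ler_wpM2r ?ler_wpM2l // invr_ge0 ltW.
Qed.

Unset Implicit Arguments.
Theorem theorem6 (R : realType) (d n : nat) (Z : Type)
  (z : 'I_n -> Z) (ell : Z -> 'cV[R]_d -> R) (pi : 'cV[R]_d -> R)
  (Lam : set R) (betahat : R -> 'cV[R]_d)
  (betam betaprox : 'I_n -> R -> 'cV[R]_d) (cm C3 : R) :
  (0 < n)%N ->
  Lam `<=` [set x | 0 <= x] -> Lam 0 ->
  (forall zz x, differentiable (ell zz) x) ->
  (forall zz x, differentiable (grad (ell zz)) x) ->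
  (forall lam, Lam lam -> is_argmin (mPn z ell pi lam) (betahat lam)) ->
  (forall i lam, Lam lam -> is_argmin (mPm z ell pi i lam) (betam i lam)) ->
  (forall i lam, Lam lam ->
     is_argmin (prox_obj z ell pi (betahat lam) i lam) (betaprox i lam)) ->
  convex_fun pi ->
  0 < cm ->
  (forall i lam, Lam lam ->
     grad_growth (fun r => cm * r ^+ 2) (mPm z ell pi i lam)) ->
  (forall i, (LipM (hess (lossPm z ell i)) <= C3%:E)%E) ->
  (Bsr z ell Lam betahat 0 3 < +oo)%E ->
  (Bsr z ell Lam betahat 1 3 < +oo)%E ->
  (Bsr z ell Lam betahat 1 4 < +oo)%E ->
  forall lam, Lam lam ->
    `|ProxACV z ell betaprox lam - CV z ell betam lam| <=
      C3 / (n%:R ^+ 2) *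
      (fine (Bsr z ell Lam betahat 0 3) / (2 * cm ^+ 3)
       + fine (Bsr z ell Lam betahat 1 3) / (2 * n%:R * cm ^+ 4)
       + C3 * fine (Bsr z ell Lam betahat 1 4) / (8 * n%:R ^+ 2 * cm ^+ 6)).
Proof.
move=> n0 LamS Lam0 dell dgell hmin mmin pmin cvx cm0 growth hessC B03 B13 B14 lam Llam.
(* For [d = 0] nothing forces [0 <= C3], but both sides vanish. *)
have [d0|dpos] := posnP d.
  rewrite (ProxACV_CV_dim0 z ell betaprox betam lam d0) subrr normr0.
  by rewrite !(Bsr_dim0 _ _ _ _ _ d0 Lam0) /= mulr0 !mul0r !addr0 mulr0.
have C0 : 0 <= C3.
  by rewrite -lee_fin (le_trans (LipM_ge0 _ dpos) (hessC (Ordinal n0))).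
have LipV_fin := LipV_lt_pinfty_of_Bsr n0 Llam B13.
have gap i := loo_loss_gap_le n0 dell dgell (LamS _ Llam) cm0 C0 cvx (hmin _ Llam)
  (mmin i _ Llam) (pmin i _ Llam) (growth i _ Llam) (growth i 0 Lam0) (hessC i)
  (LipV_fin i).
apply: le_trans (ProxACV_sub_CV_le gap) _.
apply: mean_bound_le => //.
- exact: mean_l2_grad_le_Bsr.
- exact: mean_LipV_le_Bsr.
- exact: mean_LipV_le_Bsr.
Qed.
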